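(* Let $(\mathscr{P},\mathscr{B},\mathrm{I})$ be a linear space with incidence graph $\Gamma$, let $\varphi$ be a gain function on $\Gamma$ with gain group $G$ acting on the left on a nonempty set $\Lambda$. Then $\mathfrak{M}(\Gamma,\varphi)$ is a generalized quadrangle if and only if for every $p\in\mathscr{P}$ and $b\in\mathscr{B}$ with $p$ not incident with $b$, and every $\lambda\in\Lambda$, the function $\rho_{b,p,\lambda}:\mathscr{P}_b\to\Lambda$ is bijective. Moreover, when $\mathfrak{M}(\Gamma,\varphi)$ is a generalized quadrangle: (1) the set $X=\{x_p : p\in\mathscr{P}\}$ is an ovoid of $\mathfrak{M}(\Gamma,\varphi)$; (2) for every $b\in\mathscr{B}$ the set $\mathscr{P}_b$ has the same cardinality as $\Lambda$; hence $(\mathscr{P},\mathscr{B},\mathrm{I})$ is a Steiner system; (3) if $\mathscr{P}$ is finite, then $\Lambda$ is finite, $|\mathscr{P}|=v\ge 3$, $|\Lambda|=k\ge 2$, and in $\mathfrak{M}(\Gamma,\varphi)$ every line is incident with exactly $1+s$ points and every point is incident with exactly $1+t$ lines, where $s=\frac{v-1}{k-1}$ and $t=k-1$.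
   Context: An incidence structure is a triple $(\mathscr{P},\mathscr{B},\mathrm{I})$ where $\mathscr{P}$ (points) and $\mathscr{B}$ (lines) are nonempty disjoint sets and $\mathrm{I}\subseteq\mathscr{P}\times\mathscr{B}$ is a nonempty incidence relation; write $p\ \mathrm{I}\ b$ or $b\ \mathrm{I}\ p$ when $(p,b)\in\mathrm{I}$, and $\mathscr{P}_b=\{q\in\mathscr{P}: q\ \mathrm{I}\ b\}$. It is a linear space if any two distinct points are incident with exactly one common line, each line is incident with at least two points, and some point and line are not incident. A linear space is a Steiner system if all sets $\mathscr{P}_b$ have the same (possibly infinite) cardinality. The incidence graph $\Gamma$ is the bipartite graph with vertex set $\mathscr{P}\cup\mathscr{B}$ and an edge $bp$ for each incident pair; every edge is oriented from its line to its point. A gain function with gain group $G$ assigns to each edge $e$ an element $\varphi(e)\in G$ (extended to the free group on edges, so $\varphi(e^{-1})=\varphi(e)^{-1}$). For a walk $w=(u_0,e_1,u_1,\dots,e_n,u_n)$ in $\Gamma$, $\varphi_w=\varphi(e_n)^{\delta_n}\cdots\varphi(e_1)^{\delta_1}$ with $\delta_i=1$ if $e_i$ is oriented from $u_{i-1}$ to $u_i$ and $\delta_i=-1$ otherwise. For $b\in\mathscr{B}$, $p\in\mathscr{P}$ with $p$ not incident with $b$, define $\rho_{b,p}:\mathscr{P}_b\to G$ by $\rho_{b,p}(q)=\varphi_w$ where $w=(b,e_1,q,e_2,b',e_3,p)$ and $b'$ is the unique line incident with $p$ and $q$ (so $\rho_{b,p}(q)=\varphi(b'p)\varphi(b'q)^{-1}\varphi(bq)$);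 and for $\lambda\in\Lambda$ define $\rho_{b,p,\lambda}(q)=\rho_{b,p}(q)\cdot\lambda$. Construction $\mathfrak{M}(\Gamma,\varphi)$: the incidence structure whose points are the formal symbols $x_p$ ($p\in\mathscr{P}$) and $y_{b,\lambda}$ ($b\in\mathscr{B},\lambda\in\Lambda$), whose lines are the formal symbols $z_{p,\lambda}$ ($p\in\mathscr{P},\lambda\in\Lambda$), and whose incidences are exactly: $x_p$ incident with $z_{p,\lambda}$ for all $\lambda$, and $y_{b,\lambda}$ incident with $z_{p,\mu}$ whenever $b\ \mathrm{I}\ p$ and $\mu=\varphi(bp)\cdot\lambda$. A $k$-chain is a sequence $(u_0,\dots,u_k)$ of elements with $u_i$ incident with $u_{i-1}$; $d(u,v)$ is the least $k$ admitting a $k$-chain from $u$ to $v$. A generalized quadrangle is an incidence structure with $d(u,v)\le 4$ for all $u,v$ and a unique $k$-chain from $u$ to $v$ whenever $d(u,v)=k<4$. An ovoid of a generalized quadrangle is a set $O$ of points such that each line is incident with exactly one point of $O$. *)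

From Stdlib Require Import List Arith ClassicalEpsilon.
Import ListNotations.
Set Implicit Arguments.

Section Defs.

Variables (Pt Ln : Type) (inc : Pt -> Ln -> Prop).

Definition elt := (Pt + Ln)%type.

Definition elt_inc (u v : elt) : Prop :=
  match u, v with
  | inl p, inr l => inc p l
  | inr l, inl p => inc p l
  | _, _ => False
  end.

Fixpoint consec (s : list elt) : Prop :=
  match s with
  | x :: ((y :: _) as t) => elt_inc y x /\ consec t
  | _ => True
  end.

Definition is_chain (u v : elt) (k : nat) (s : list elt) : Prop :=
  length s = S k /\ hd_error s = Some u /\ last s u = v /\ consec s.

Definition is_dist (u v : elt) (k : nat) : Prop :=
  (exists s, is_chain u v k s) /\
  (forall j s, is_chain u v j s -> k <= j).

Definition gen_quadrangle : Prop :=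
  (forall u v : elt, exists k, k <= 4 /\ is_dist u v k) /\
  (forall (u v : elt) (k : nat), k < 4 -> is_dist u v k ->
     forall s1 s2, is_chain u v k s1 -> is_chain u v k s2 -> s1 = s2).

Definition ovoid (O : Pt -> Prop) : Prop :=
  forall l : Ln, exists! x, O x /\ inc x l.

Definition points_on (b : Ln) := { q : Pt | inc q b }.

Definition linear_space : Prop :=
  (forall p q : Pt, p <> q -> exists! b, inc p b /\ inc q b) /\
  (forall b : Ln, exists p q, p <> q /\ inc p b /\ inc q b) /\
  (exists p b, ~ inc p b).

Definition bij (A C : Type) (f : A -> C) : Prop :=
  (forall x y, f x = f y -> x = y) /\ (forall z, exists x, f x = z).

Definition equipotent (A C : Type) : Prop := exists f : A -> C, bij f.

Definition steiner_system : Prop :=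
  linear_space /\ forall b b' : Ln, equipotent (points_on b) (points_on b').

End Defs.

Definition has_card (T : Type) (A : T -> Prop) (n : nat) : Prop :=
  exists l : list T, NoDup l /\ length l = n /\ forall x, In x l <-> A x.

Definition finite_type (T : Type) : Prop := exists n, has_card (fun _ : T => True) n.

Record is_group (G : Type) (mul : G -> G -> G) (inv : G -> G) (one : G) : Prop := {
  grp_assoc : forall x y z, mul x (mul y z) = mul (mul x y) z;
  grp_mul1g : forall x, mul one x = x;
  grp_mulg1 : forall x, mul x one = x;
  grp_mulVg : forall x, mul (inv x) x = one;
  grp_mulgV : forall x, mul x (inv x) = one }.

Record is_left_action (G L : Type) (mul : G -> G -> G) (one : G)
    (act : G -> L -> L) : Prop := {
  act1 : forall x, act one x = x;
  actM : forall g h x, act (mul g h) x = act g (act h x) }.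

(* A gain function is given as phi p b = phi(bp) for the edge bp (oriented b -> p);
   its values on non-incident pairs are irrelevant. *)
Unset Implicit Arguments.
Section Rho.
Variables (P B G L : Type) (I : P -> B -> Prop)
  (mul : G -> G -> G) (inv : G -> G) (act : G -> L -> L) (phi : P -> B -> G).

(* the (unique, in a linear space, when p <> q) line through p and q *)
Definition line_through (b0 : B) (p q : P) : B :=
  epsilon (inhabits b0) (fun b' => I p b' /\ I q b').

Definition rho (b : B) (p : P) (q : points_on I b) : G :=
  let b' := line_through b p (proj1_sig q) in
  mul (mul (phi p b') (inv (phi (proj1_sig q) b'))) (phi (proj1_sig q) b).

Definition rho_lam (b : B) (p : P) (lam : L) (q : points_on I b) : L :=
  act (rho b p q) lam.

(* points: inl p = x_p, inr (b, lam) = y_{b,lam};  lines: (p, lam) = z_{p,lam} *)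
Definition M_inc (x : (P + (B * L))%type) (z : (P * L)%type) : Prop :=
  match x with
  | inl p => fst z = p
  | inr (b, lam) => I (fst z) b /\ snd z = act (phi (fst z) b) lam
  end.

End Rho.
Arguments line_through {P B} I b0 p q.
Arguments rho {P B G} I mul inv phi b p q.
Arguments rho_lam {P B G L} I mul inv act phi b p lam q.
Arguments M_inc {P B G L} I act phi x z.

(* A generalized quadrangle is the same thing as an incidence structure without isolated
   elements in which two points share at most one line and every antiflag (x, l) has a
   unique projection: a unique flag (y, m) with x I m I y I l.  In M(Gamma, phi) the first two
   properties always hold, and so does the third except possibly for the antiflags
   (y_{b,lam}, z_{p,mu}) with p not on b.  The projections of such an antiflag are exactly
   the chains y_{b,lam} I z_{q,phi(bq) lam} I y_{pq,lam'} I z_{p,mu} with q on b and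
   rho_{b,p,lam}(q) = mu, so unique projection for every mu is bijectivity of rho_{b,p,lam}.  In the finite case, counting the points other
   than p along the lines through p gives v - 1 = r (k - 1), so every point is on the same
   number s of lines; a line z_{p,mu} then carries x_p and one point y_{b,_} for each of
   the s lines b through p, while x_p and y_{b,lam} lie on k lines. *)

From Stdlib Require Import List Arith Lia.
From Stdlib Require Import Classical ClassicalEpsilon ProofIrrelevance.
Import ListNotations.

Lemma last_cons {A} (a d : A) s : last (a :: s) d = last s a.
Proof.
  revert a d; induction s as [|b s IH]; intros a d; [reflexivity|].
  change (last (b :: s) d = last (b :: s) a). now rewrite !IH.
Qed.

(** * Generalized quadrangles *)

Section Quadrangle.
Context {Pt Ln : Type} (inc : Pt -> Ln -> Prop).

Local Ltac solve_chain := repeat split; cbn; auto.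

Definition is_point (u : elt Pt Ln) : bool := match u with inl _ => true | inr _ => false end.

Lemma consec_parity s (a : elt Pt Ln) : consec inc (a :: s) ->
  is_point (last s a) = if Nat.even (length s) then is_point a else negb (is_point a).
Proof.
  revert a; induction s as [|b s IH]; intros a Hs; [reflexivity|].
  destruct Hs as [Hab Hs]. rewrite last_cons, (IH b Hs). cbn [length].
  rewrite Nat.even_succ, <- Nat.negb_even.
  destruct a, b; try contradiction; now destruct (Nat.even (length s)).
Qed.

Lemma chain_parity {u v k s} : is_chain inc u v k s ->
  is_point v = if Nat.even k then is_point u else negb (is_point u).
Proof.
  intros [Hlen [Hhd [Hlast Hs]]]. destruct s as [|a s]; [discriminate|].
  injection Hhd as ->. injection Hlen as <-.
  rewrite <- Hlast, last_cons. now apply consec_parity.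
Qed.

Lemma chain_length_parity {u v j k s s'} :
  is_chain inc u v j s -> is_chain inc u v k s' -> Nat.even j = Nat.even k.
Proof.
  intros Hs Hs'. pose proof (chain_parity Hs) as Ej. pose proof (chain_parity Hs') as Ek.
  destruct (Nat.even j), (Nat.even k), (is_point u); cbn in *; congruence.
Qed.

(* Chains with the same ends have lengths of the same parity (the incidence graph is
   bipartite), so only shorter chains of the same parity need to be excluded. *)
Lemma is_dist_intro {u v k} s : is_chain inc u v k s ->
  (forall j s', j < k -> Nat.even j = Nat.even k -> ~ is_chain inc u v j s') ->
  is_dist inc u v k.
Proof.
  intros Hs Hmin. split; [eauto|]. intros j s' Hs'.
  destruct (le_lt_dec k j) as [|Hj]; [assumption|].
  exfalso. exact (Hmin j s' Hj (chain_length_parity Hs' Hs) Hs').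
Qed.

Lemma chain0_inv {u v s} : is_chain inc u v 0 s -> s = [u] /\ u = v.
Proof.
  intros [Hlen [Hhd [Hlast _]]].
  destruct s as [|a [|b s]]; try discriminate. now injection Hhd as ->.
Qed.

Lemma chain1_inv {u v s} : is_chain inc u v 1 s -> s = [u; v] /\ elt_inc inc v u.
Proof.
  intros [Hlen [Hhd [Hlast Hs]]].
  destruct s as [|a [|b [|c s]]]; try discriminate. injection Hhd as ->.
  subst v. split; [reflexivity|apply Hs].
Qed.

Lemma chain2_inv {u v s} : is_chain inc u v 2 s ->
  exists w, s = [u; w; v] /\ elt_inc inc w u /\ elt_inc inc v w.
Proof.
  intros [Hlen [Hhd [Hlast Hs]]].
  destruct s as [|a [|b [|c [|d s]]]]; try discriminate. injection Hhd as ->.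
  subst v. exists b. cbn in Hs. tauto.
Qed.

Lemma chain3_inv {u v s} : is_chain inc u v 3 s -> exists w1 w2, s = [u; w1; w2; v] /\
  elt_inc inc w1 u /\ elt_inc inc w2 w1 /\ elt_inc inc v w2.
Proof.
  intros [Hlen [Hhd [Hlast Hs]]].
  destruct s as [|a [|b [|c [|d [|e s]]]]]; try discriminate. injection Hhd as ->.
  subst v. exists b, c. cbn in Hs. tauto.
Qed.

Definition no_isolated_elements : Prop :=
  (forall x, exists l, inc x l) /\ (forall l, exists x, inc x l).

Definition partial_linear : Prop :=
  forall x y l l', x <> y -> inc x l -> inc y l -> inc x l' -> inc y l' -> l = l'.

Definition unique_projection x l : Prop :=
  (exists m y, inc x m /\ inc y m /\ inc y l) /\
  (forall m y m' y', inc x m -> inc y m -> inc y l -> inc x m' -> inc y' m' -> inc y' l ->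
     m = m' /\ y = y').

Definition projection_axiom : Prop := forall x l, ~ inc x l -> unique_projection x l.

Lemma projection_axiom_of_gen_quadrangle : gen_quadrangle inc -> projection_axiom.
Proof.
  intros [Hdist Huniq] x l Hxl.
  destruct (Hdist (inl x) (inr l)) as [k [Hk Hd]].
  pose proof Hd as [[s Hs] _].
  assert (Hk3 : k = 3).
  { (* d(x, l) is odd, at most 4, and not 1 *)
    pose proof (chain_parity Hs) as Hpar. cbn in Hpar.
    destruct k as [|[|[|[|[|k]]]]]; try discriminate Hpar; try lia.
    exfalso. exact (Hxl (proj2 (chain1_inv Hs))). }
  subst k. split.
  - destruct (chain3_inv Hs) as [[a|m] [[y|b] [_ [Hm [Hy Hl]]]]]; try contradiction. eauto.
  - intros m y m' y' Hxm Hym Hyl Hxm' Hy'm' Hy'l.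
    assert (E : [inl x; inr m; inl y; inr l] = [inl x; inr m'; inl y'; inr l]
                  :> list (elt Pt Ln)).
    { apply (Huniq (inl x) (inr l) 3); [lia|exact Hd|solve_chain..]. }
    now injection E as -> ->.
Qed.

Section FromAxioms.
Hypotheses (Hiso : no_isolated_elements) (Hpl : partial_linear) (Hproj : projection_axiom).

Lemma dist_point_point x y : exists k, k <= 4 /\ is_dist inc (inl x) (inl y) k.
Proof.
  destruct (classic (x = y)) as [<-|Hxy].
  { exists 0. split; [lia|]. apply (is_dist_intro [inl x]); [solve_chain|intros; lia]. }
  destruct (classic (exists l, inc x l /\ inc y l)) as [[l [Hxl Hyl]]|Hncol].
  { exists 2. split; [lia|]. apply (is_dist_intro [inl x; inr l; inl y]); [solve_chain|].
    intros [|[|]] s Hj Hpar Hs; try discriminate Hpar; try lia.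
    apply Hxy. injection (proj2 (chain0_inv Hs)). auto. }
  destruct (proj1 Hiso y) as [l Hyl].
  assert (Hxl : ~ inc x l) by eauto.
  destruct (proj1 (Hproj x l Hxl)) as [m [z [Hxm [Hzm Hzl]]]].
  exists 4. split; [lia|].
  apply (is_dist_intro [inl x; inr m; inl z; inr l; inl y]); [solve_chain|].
  intros [|[|[|[|]]]] s Hj Hpar Hs; try discriminate Hpar; try lia.
  - apply Hxy. injection (proj2 (chain0_inv Hs)). auto.
  - destruct (chain2_inv Hs) as [[w|n] [_ [Hw Hy]]]; [contradiction|eauto].
Qed.

Lemma dist_point_line x l : exists k, k <= 4 /\ is_dist inc (inl x) (inr l) k.
Proof.
  destruct (classic (inc x l)) as [Hxl|Hxl].
  { exists 1. split; [lia|]. apply (is_dist_intro [inl x; inr l]); [solve_chain|].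
    intros [|] s Hj Hpar; [discriminate Hpar|lia]. }
  destruct (proj1 (Hproj x l Hxl)) as [m [y [Hxm [Hym Hyl]]]].
  exists 3. split; [lia|].
  apply (is_dist_intro [inl x; inr m; inl y; inr l]); [solve_chain|].
  intros [|[|[|]]] s Hj Hpar Hs; try discriminate Hpar; try lia.
  exact (Hxl (proj2 (chain1_inv Hs))).
Qed.

Lemma dist_line_point l x : exists k, k <= 4 /\ is_dist inc (inr l) (inl x) k.
Proof.
  destruct (classic (inc x l)) as [Hxl|Hxl].
  { exists 1. split; [lia|]. apply (is_dist_intro [inr l; inl x]); [solve_chain|].
    intros [|] s Hj Hpar; [discriminate Hpar|lia]. }
  destruct (proj1 (Hproj x l Hxl)) as [m [y [Hxm [Hym Hyl]]]].
  exists 3. split; [lia|].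
  apply (is_dist_intro [inr l; inl y; inr m; inl x]); [solve_chain|].
  intros [|[|[|]]] s Hj Hpar Hs; try discriminate Hpar; try lia.
  exact (Hxl (proj2 (chain1_inv Hs))).
Qed.

Lemma dist_line_line l l' : exists k, k <= 4 /\ is_dist inc (inr l) (inr l') k.
Proof.
  destruct (classic (l = l')) as [<-|Hll].
  { exists 0. split; [lia|]. apply (is_dist_intro [inr l]); [solve_chain|intros; lia]. }
  destruct (classic (exists x, inc x l /\ inc x l')) as [[x [Hxl Hxl']]|Hnconc].
  { exists 2. split; [lia|]. apply (is_dist_intro [inr l; inl x; inr l']); [solve_chain|].
    intros [|[|]] s Hj Hpar Hs; try discriminate Hpar; try lia.
    apply Hll. injection (proj2 (chain0_inv Hs)). auto. }
  destruct (proj2 Hiso l') as [y Hyl'].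
  assert (Hyl : ~ inc y l) by eauto.
  destruct (proj1 (Hproj y l Hyl)) as [m [z [Hym [Hzm Hzl]]]].
  exists 4. split; [lia|].
  apply (is_dist_intro [inr l; inl z; inr m; inl y; inr l']); [solve_chain|].
  intros [|[|[|[|]]]] s Hj Hpar Hs; try discriminate Hpar; try lia.
  - apply Hll. injection (proj2 (chain0_inv Hs)). auto.
  - destruct (chain2_inv Hs) as [[w|n] [_ [Hw Hl']]]; [eauto|contradiction].
Qed.

Lemma chain2_unique {u v s1 s2} : u <> v ->
  is_chain inc u v 2 s1 -> is_chain inc u v 2 s2 -> s1 = s2.
Proof.
  intros Huv H1 H2.
  destruct (chain2_inv H1) as [w1 [-> [Hw1u Hvw1]]].
  destruct (chain2_inv H2) as [w2 [-> [Hw2u Hvw2]]].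
  destruct u as [x|l], v as [y|l'], w1 as [a1|m1], w2 as [a2|m2]; cbn in *;
    try contradiction.
  - assert (Hxy : x <> y) by congruence. now rewrite (Hpl x y m1 m2 Hxy Hw1u Hvw1 Hw2u Hvw2).
  - destruct (classic (a1 = a2)) as [->|Ha]; [reflexivity|].
    exfalso. apply Huv. f_equal. exact (Hpl a1 a2 l l' Ha Hw1u Hw2u Hvw1 Hvw2).
Qed.

Lemma chain3_unique {u v s1 s2} : ~ elt_inc inc v u ->
  is_chain inc u v 3 s1 -> is_chain inc u v 3 s2 -> s1 = s2.
Proof.
  intros Hvu H1 H2.
  destruct (chain3_inv H1) as [a1 [b1 [-> [A1 [A2 A3]]]]].
  destruct (chain3_inv H2) as [a2 [b2 [-> [B1 [B2 B3]]]]].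
  destruct u as [x|l], v as [y|l'], a1 as [a1|a1], a2 as [a2|a2], b1 as [b1|b1],
    b2 as [b2|b2]; cbn in *; try contradiction.
  - now destruct (proj2 (Hproj _ _ Hvu) _ _ _ _ A1 A2 A3 B1 B2 B3) as [-> ->].
  - now destruct (proj2 (Hproj _ _ Hvu) _ _ _ _ A3 A2 A1 B3 B2 B1) as [-> ->].
Qed.

Lemma gen_quadrangle_of_axioms : gen_quadrangle inc.
Proof.
  split.
  - intros [x|l] [y|l']; auto using dist_point_point, dist_point_line, dist_line_point,
      dist_line_line.
  - intros u v k Hk [_ Hmin] s1 s2 H1 H2.
    destruct k as [|[|[|[|k]]]]; try lia.
    + now rewrite (proj1 (chain0_inv H1)), (proj1 (chain0_inv H2)).
    + now rewrite (proj1 (chain1_inv H1)), (proj1 (chain1_inv H2)).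
    + refine (chain2_unique _ H1 H2). intros <-.
      assert (Hle : 2 <= 0) by (apply (Hmin 0 [u]); repeat split). lia.
    + refine (chain3_unique _ H1 H2). intros Hvu.
      assert (Hle : 3 <= 1) by (apply (Hmin 1 [u; v]); repeat split; assumption). lia.
Qed.

End FromAxioms.
End Quadrangle.

(** * Finite cardinalities *)

Definition asbool (Q : Prop) : bool := if excluded_middle_informative Q then true else false.

Lemma asboolP (Q : Prop) : asbool Q = true <-> Q.
Proof. unfold asbool. destruct excluded_middle_informative; split; congruence || tauto. Qed.

Section Cardinality.
Context {T U : Type}.
Implicit Types (A : T -> Prop) (C : U -> Prop).

Lemma has_card_ext {A A' n} : has_card A n -> (forall x, A x <-> A' x) -> has_card A' n.
Proof.
  intros [l [Hl [Hn HA]]] E. exists l. split; [exact Hl|split; [exact Hn|]].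
  intros x. rewrite HA. apply E.
Qed.

Lemma has_card_NoDup_le {A n l} : has_card A n -> NoDup l -> (forall x, In x l -> A x) ->
  length l <= n.
Proof.
  intros [l' [_ [<- HA]]] Hl Hsub. apply NoDup_incl_length; [exact Hl|].
  intros x Hx. apply HA, Hsub, Hx.
Qed.

Lemma has_card_unique {A n m} : has_card A n -> has_card A m -> n = m.
Proof.
  intros Hn Hm. pose proof Hn as [l [Hl [<- HA]]]. pose proof Hm as [l' [Hl' [<- HA']]].
  apply Nat.le_antisymm.
  - apply (has_card_NoDup_le Hm Hl). intros x. apply HA.
  - apply (has_card_NoDup_le Hn Hl'). intros x. apply HA'.
Qed.

Lemma has_card_empty {A n} : has_card A n -> (forall x, ~ A x) -> n = 0.
Proof.
  intros [[|a l] [_ [<- HA]]] Hempty; [reflexivity|].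
  exfalso. apply (Hempty a), HA. now left.
Qed.

Lemma has_card_split {A} (Q : T -> Prop) {n} : has_card A n -> exists m m',
  has_card (fun x => A x /\ Q x) m /\ has_card (fun x => A x /\ ~ Q x) m' /\ n = m + m'.
Proof.
  intros [l [Hl [<- HA]]].
  exists (length (filter (fun x => asbool (Q x)) l)),
         (length (filter (fun x => negb (asbool (Q x))) l)).
  split; [|split].
  - eexists. split; [apply NoDup_filter, Hl|split; [reflexivity|]].
    intros x. rewrite filter_In, asboolP, HA. reflexivity.
  - eexists. split; [apply NoDup_filter, Hl|split; [reflexivity|]].
    intros x. rewrite filter_In, HA, Bool.negb_true_iff, <- Bool.not_true_iff_false, asboolP.
    reflexivity.
  - symmetry. apply filter_length.
Qed.

Lemma has_card_restrict {A} (Q : T -> Prop) {n} : has_card A n ->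
  exists m, has_card (fun x => A x /\ Q x) m.
Proof. intros HA. destruct (has_card_split Q HA) as [m [_ [Hm _]]]. eauto. Qed.

Lemma has_card_remove {A n} p : has_card A n -> A p -> has_card (fun x => A x /\ x <> p) (n - 1).
Proof.
  intros [l [Hl [<- HA]]] Hp. apply HA in Hp. destruct (in_split _ _ Hp) as [l1 [l2 ->]].
  destruct (NoDup_remove _ _ _ Hl) as [Hl' Hpl].
  exists (l1 ++ l2). split; [exact Hl'|split].
  - rewrite !length_app. cbn. lia.
  - intros x. rewrite <- HA, !in_app_iff. cbn. split.
    + intros Hx. split; [tauto|]. intros ->. apply Hpl, in_app_iff, Hx.
    + intros [Hx Hxp]. destruct Hx as [|[->|]]; tauto.
Qed.

Lemma has_card_option {A n} :
  has_card A n -> has_card (fun o => match o with None => True | Some x => A x end) (S n).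
Proof.
  intros [l [Hl [<- HA]]]. exists (None :: map Some l). split; [|split].
  - constructor.
    + rewrite in_map_iff. intros [x [E _]]. discriminate.
    + apply NoDup_map_NoDup_ForallPairs; [|exact Hl]. intros x y _ _ E. now injection E.
  - cbn. now rewrite length_map.
  - intros [x|]; cbn; [rewrite in_map_iff, <- HA|tauto]. split.
    + intros [E|[y [E Hy]]]; [discriminate|]. now injection E as <-.
    + eauto.
Qed.

Lemma has_card_bij {A C} (f : T -> U) {n} : has_card A n ->
  (forall x y, A x -> A y -> f x = f y -> x = y) -> (forall x, A x -> C (f x)) ->
  (forall z, C z -> exists x, A x /\ f x = z) -> has_card C n.
Proof.
  intros [l [Hl [<- HA]]] Hinj Hmaps Hsurj. exists (map f l). split; [|split].
  - apply NoDup_map_NoDup_ForallPairs; [|exact Hl].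
    intros x y Hx Hy. apply Hinj; apply HA; assumption.
  - apply length_map.
  - intros z. rewrite in_map_iff. split.
    + intros [x [<- Hx]]. apply Hmaps, HA, Hx.
    + intros Hz. destruct (Hsurj z Hz) as [x [Hx <-]]. exists x. split; [reflexivity|apply HA, Hx].
Qed.

Lemma has_card_image {A} (f : T -> U) {n} : has_card A n ->
  exists m, has_card (fun z => exists x, A x /\ f x = z) m.
Proof.
  intros [l [_ [_ HA]]].
  set (decU := fun z z' : U => excluded_middle_informative (z = z')).
  exists (length (nodup decU (map f l))), (nodup decU (map f l)).
  split; [apply NoDup_nodup|split; [reflexivity|]].
  intros z. rewrite nodup_In, in_map_iff. split.
  - intros [x [<- Hx]]. exists x. split; [apply HA, Hx|reflexivity].
  - intros [x [Hx <-]]. exists x. split; [reflexivity|apply HA, Hx].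
Qed.

Lemma has_card_sig {Q : T -> Prop} {n} : has_card Q n -> equipotent {x | Q x} U ->
  has_card (fun _ : U => True) n.
Proof.
  intros HQ [f [Hinj Hsurj]].
  destruct (classic (inhabited U)) as [[z0]|HU].
  - set (g x := match excluded_middle_informative (Q x) with
                | left Hx => f (exist _ x Hx) | right _ => z0 end).
    apply (has_card_bij g HQ); [|tauto|].
    + intros x y Hx Hy. unfold g.
      destruct excluded_middle_informative; [|contradiction].
      destruct excluded_middle_informative; [|contradiction].
      intros E. apply Hinj in E. now injection E.
    + intros z _. destruct (Hsurj z) as [[x Hx] <-]. exists x. split; [exact Hx|].
      unfold g. destruct excluded_middle_informative; [|contradiction].
      now rewrite (proof_irrelevance _ Hx q).
  - assert (Hn : n = 0).
    { apply (has_card_empty HQ). intros x Hx. exact (HU (inhabits (f (exist _ x Hx)))). }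
    subst n. exists []. split; [constructor|split; [reflexivity|]].
    intros z. exfalso. exact (HU (inhabits z)).
Qed.

Lemma has_card_fibers {A C} (c : T -> U) {n d m} : has_card A n -> has_card C d ->
  (forall x, A x -> C (c x)) -> (forall z, C z -> has_card (fun x => A x /\ c x = z) m) ->
  n = d * m.
Proof.
  intros HA [lC [HlC [<- HC]]] Hmaps Hfib.
  setoid_rewrite <- HC in Hmaps. setoid_rewrite <- HC in Hfib. clear C HC.
  revert A n HA Hmaps Hfib. induction lC as [|z lC IH]; intros A n HA Hmaps Hfib.
  - exact (has_card_empty HA Hmaps).
  - inversion HlC as [|? ? Hz HlC']; subst.
    destruct (has_card_split (fun x => c x = z) HA) as [n1 [n2 [Hn1 [Hn2 ->]]]].
    rewrite (has_card_unique Hn1 (Hfib z (or_introl eq_refl))).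
    rewrite (IH HlC' _ _ Hn2); [cbn; lia| |].
    + intros x [Hx Hxz]. destruct (Hmaps x Hx); [congruence|assumption].
    + intros z' Hz'. apply (has_card_ext (Hfib z' (or_intror Hz'))). intros x. split.
      * intros [Hx <-]. split; [split; [exact Hx|]|reflexivity].
        intros E. apply Hz. rewrite <- E. exact Hz'.
      * intros [[Hx _] E]. split; assumption.
Qed.

End Cardinality.

Lemma equipotent_sym {A C} : equipotent A C -> equipotent C A.
Proof.
  intros [f [Hinj Hsurj]].
  exists (fun z => proj1_sig (constructive_indefinite_description _ (Hsurj z))). split.
  - intros z1 z2.
    destruct (constructive_indefinite_description _ (Hsurj z1)) as [x1 <-].
    destruct (constructive_indefinite_description _ (Hsurj z2)) as [x2 <-].
    cbn. now intros ->.
  - intros x. exists (f x).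
    destruct (constructive_indefinite_description _ (Hsurj (f x))) as [y Hy]. exact (Hinj _ _ Hy).
Qed.

Lemma equipotent_trans {A C D} : equipotent A C -> equipotent C D -> equipotent A D.
Proof.
  intros [f [Hfinj Hfsurj]] [g [Hginj Hgsurj]]. exists (fun x => g (f x)). split.
  - auto.
  - intros z. destruct (Hgsurj z) as [y <-]. destruct (Hfsurj y) as [x <-]. eauto.
Qed.

(** * Linear spaces *)

Section LinearSpace.
Context {P B : Type} {I : P -> B -> Prop}.
Hypothesis hlin : linear_space I.

Lemma linear_space_line_unique {p q b c} : p <> q -> I p b -> I q b -> I p c -> I q c -> b = c.
Proof.
  intros Hpq Hpb Hqb Hpc Hqc. destruct (proj1 hlin p q Hpq) as [d [_ Hd]].
  rewrite <- (Hd b), <- (Hd c); auto.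
Qed.

Lemma line_through_inc b0 {p q} : p <> q ->
  I p (line_through I b0 p q) /\ I q (line_through I b0 p q).
Proof.
  intros Hpq. unfold line_through. apply epsilon_spec.
  destruct (proj1 hlin p q Hpq) as [d [Hd _]]. eauto.
Qed.

Lemma line_through_eq b0 {p q c} : p <> q -> I p c -> I q c -> line_through I b0 p q = c.
Proof.
  intros Hpq Hpc Hqc. destruct (line_through_inc b0 Hpq).
  eapply linear_space_line_unique; eauto.
Qed.

Lemma linear_space_exists_not_on b : exists p, ~ I p b.
Proof.
  destruct hlin as [_ [Htwo [p0 [b0 Hp0]]]].
  destruct (classic (I p0 b)) as [Hp0b|]; [|eauto].
  destruct (Htwo b0) as [q1 [q2 [Hq [Hq1 Hq2]]]].
  destruct (classic (I q1 b)) as [Hq1b|]; [|eauto].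
  destruct (classic (I q2 b)) as [Hq2b|]; [|eauto].
  exfalso. apply Hp0. rewrite (linear_space_line_unique Hq Hq1 Hq2 Hq1b Hq2b). exact Hp0b.
Qed.

Lemma linear_space_line_card_ge2 {b k} : has_card (fun q => I q b) k -> 2 <= k.
Proof.
  intros Hk. destruct (proj1 (proj2 hlin) b) as [q1 [q2 [Hq [Hq1 Hq2]]]].
  apply (has_card_NoDup_le (l := [q1; q2]) Hk).
  - constructor; [cbn; intuition congruence|constructor; [tauto|constructor]].
  - intros x [<-|[<-|[]]]; assumption.
Qed.

Lemma linear_space_card_ge3 {v} : has_card (fun _ : P => True) v -> 3 <= v.
Proof.
  intros Hv. destruct hlin as [_ [Htwo [p [b Hpb]]]].
  destruct (Htwo b) as [q1 [q2 [Hq [Hq1 Hq2]]]].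
  apply (has_card_NoDup_le (l := [p; q1; q2]) Hv); [|tauto].
  assert (p <> q1) by congruence. assert (p <> q2) by congruence.
  constructor; [cbn; intuition congruence|].
  constructor; [cbn; intuition congruence|constructor; [tauto|constructor]].
Qed.

Lemma linear_space_replication {v k} p : has_card (fun _ : P => True) v ->
  (forall b, has_card (fun q => I q b) k) -> exists r, has_card (I p) r /\ v - 1 = r * (k - 1).
Proof.
  intros Hv Hk. destruct hlin as [_ [Htwo [_ [b0 _]]]].
  set (c := line_through I b0 p).
  assert (Hothers : has_card (fun q => q <> p) (v - 1)).
  { apply (has_card_ext (has_card_remove p Hv Logic.I)). tauto. }
  assert (Hlines : forall b, (exists q, q <> p /\ c q = b) <-> I p b).
  { intros b. split.
    - intros [q [Hq <-]]. apply line_through_inc. congruence.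
    - intros Hpb. destruct (Htwo b) as [q1 [q2 [Hq [Hq1 Hq2]]]].
      destruct (classic (q1 = p)) as [->|Hq1p].
      + exists q2. split; [congruence|]. apply line_through_eq; auto.
      + exists q1. split; [exact Hq1p|]. apply line_through_eq; auto. }
  destruct (has_card_image c Hothers) as [r Hr].
  apply (has_card_ext (A' := I p)) in Hr; [|exact Hlines].
  exists r. split; [exact Hr|].
  apply (has_card_fibers c Hothers Hr).
  - intros q Hq. apply Hlines. eauto.
  - intros b Hpb. apply (has_card_ext (has_card_remove p (Hk b) Hpb)). intros q. split.
    + intros [Hqb Hqp]. split; [exact Hqp|]. apply line_through_eq; auto.
    + intros [Hqp <-]. split; [|exact Hqp]. apply line_through_inc. congruence.
Qed.

Lemma linear_space_constant_replication {v k} : has_card (fun _ : P => True) v ->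
  (forall b, has_card (fun q => I q b) k) -> 2 <= k ->
  exists s, v - 1 = s * (k - 1) /\ forall p, has_card (I p) s.
Proof.
  intros Hv Hk Hk2. destruct hlin as [_ [_ [p0 _]]].
  destruct (linear_space_replication p0 Hv Hk) as [s [_ Hvs]].
  exists s. split; [exact Hvs|]. intros p.
  destruct (linear_space_replication p Hv Hk) as [r [Hr Hvr]].
  replace s with r; [exact Hr|]. apply (Nat.mul_cancel_r _ _ (k - 1)); lia.
Qed.

End LinearSpace.

Lemma steiner_system_of_equipotent {P B L} {I : P -> B -> Prop} : linear_space I ->
  (forall b, equipotent (points_on I b) L) -> steiner_system I.
Proof.
  intros hlin Heq. split; [exact hlin|]. intros b b'.
  exact (equipotent_trans (Heq b) (equipotent_sym (Heq b'))).
Qed.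

(** * The construction M(Gamma, phi) *)

Definition rho_bijective {P B G L} (I : P -> B -> Prop) (mul : G -> G -> G) (inv : G -> G)
  (act : G -> L -> L) (phi : P -> B -> G) : Prop :=
  forall p b, ~ I p b -> forall lam, bij (rho_lam I mul inv act phi b p lam).

Section Construction.
Context {P B G L : Type} {I : P -> B -> Prop} {mul : G -> G -> G} {inv : G -> G} {one : G}
  {act : G -> L -> L} (phi : P -> B -> G).
Hypotheses (hlin : linear_space I) (hG : is_group mul inv one)
  (hact : is_left_action mul one act) (hL : inhabited L).

Notation M := (M_inc I act phi).

Lemma act_inv_act g x : act (inv g) (act g x) = x.
Proof. now rewrite <- (actM hact), (grp_mulVg hG), (act1 hact). Qed.

Lemma act_act_inv g x : act g (act (inv g) x) = x.
Proof. now rewrite <- (actM hact), (grp_mulgV hG), (act1 hact). Qed.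

Lemma act_inj g {x y} : act g x = act g y -> x = y.
Proof. intros E. now rewrite <- (act_inv_act g x), E, act_inv_act. Qed.

Lemma rho_lam_act b p lam (q : points_on I b) :
  let c := line_through I b p (proj1_sig q) in
  rho_lam I mul inv act phi b p lam q =
  act (phi p c) (act (inv (phi (proj1_sig q) c)) (act (phi (proj1_sig q) b) lam)).
Proof. unfold rho_lam, rho. cbn. now rewrite !(actM hact). Qed.

Lemma M_projection_of_point {b} lam {p q} (Hq : I q b) : ~ I p b ->
  let c := line_through I b p q in
  let y := inr (c, act (inv (phi q c)) (act (phi q b) lam)) in
  M (inr (b, lam)) (q, act (phi q b) lam) /\ M y (q, act (phi q b) lam) /\
  M y (p, rho_lam I mul inv act phi b p lam (exist _ q Hq)).
Proof.
  intros Hpb c y. assert (Hpq : p <> q) by congruence.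
  destruct (line_through_inc hlin b Hpq) as [Hpc Hqc].
  split; [split; auto|split; [split; [exact Hqc|now rewrite act_act_inv]|]].
  split; [exact Hpc|]. now rewrite rho_lam_act.
Qed.

Lemma M_projection_rho {b lam p mu m y} : ~ I p b ->
  M (inr (b, lam)) m -> M y m -> M y (p, mu) ->
  exists q (Hq : I q b), let c := line_through I b p q in
    m = (q, act (phi q b) lam) /\ y = inr (c, act (inv (phi q c)) (act (phi q b) lam)) /\
    rho_lam I mul inv act phi b p lam (exist _ q Hq) = mu.
Proof.
  intros Hpb Hm Hym Hyz. destruct m as [q nu]. cbn in Hm. destruct Hm as [Hq ->].
  exists q, Hq. intros c. split; [reflexivity|].
  destruct y as [r|[c' kap]]; cbn in Hym, Hyz; [congruence|].
  destruct Hym as [Hqc' Ekap], Hyz as [Hpc' Emu].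
  assert (Hc : c = c') by (apply (line_through_eq hlin); congruence || assumption).
  rewrite Hc, Ekap, act_inv_act. split; [reflexivity|].
  rewrite rho_lam_act, Emu. cbn. fold c. now rewrite Hc, Ekap, act_inv_act.
Qed.

Lemma rho_lam_bij_iff {b p} lam : ~ I p b ->
  bij (rho_lam I mul inv act phi b p lam) <->
  forall mu, unique_projection M (inr (b, lam)) (p, mu).
Proof.
  intros Hpb. split.
  - intros [Hinj Hsurj] mu. split.
    + destruct (Hsurj mu) as [[q Hq] <-].
      destruct (M_projection_of_point lam Hq Hpb) as (H1 & H2 & H3). eauto.
    + intros m y m' y' H1 H2 H3 H1' H2' H3'.
      destruct (M_projection_rho Hpb H1 H2 H3) as [q [Hq [-> [-> E]]]].
      destruct (M_projection_rho Hpb H1' H2' H3') as [q' [Hq' [-> [-> E']]]].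
      rewrite <- E' in E. apply Hinj in E. injection E as <-. auto.
  - intros Hproj. split.
    + intros [q1 Hq1] [q2 Hq2] E.
      destruct (M_projection_of_point lam Hq1 Hpb) as (H1 & H2 & H3).
      destruct (M_projection_of_point lam Hq2 Hpb) as (H1' & H2' & H3').
      rewrite <- E in H3'.
      destruct (proj2 (Hproj _) _ _ _ _ H1 H2 H3 H1' H2' H3') as [Em _].
      injection Em as <-. f_equal. apply proof_irrelevance.
    + intros mu. destruct (proj1 (Hproj mu)) as [m [y [H1 [H2 H3]]]].
      destruct (M_projection_rho Hpb H1 H2 H3) as [q [Hq [_ [_ E]]]]. eauto.
Qed.

Lemma M_unique_projection_x q p mu : q <> p -> unique_projection M (inl q) (p, mu).
Proof.
  intros Hqp. destruct (proj1 hlin p q (not_eq_sym Hqp)) as [c [[Hpc Hqc] _]]. split.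
  - exists (q, act (phi q c) (act (inv (phi p c)) mu)), (inr (c, act (inv (phi p c)) mu)).
    cbn. now rewrite act_act_inv.
  - intros [q1 nu1] y [q2 nu2] y' E1 H1 H2 E2 H1' H2'. cbn in E1, E2. subst q1 q2.
    destruct y as [|[c1 k1]], y' as [|[c2 k2]]; cbn in *; try congruence.
    destruct H1 as [Hqc1 ->], H2 as [Hpc1 E], H1' as [Hqc2 ->], H2' as [Hpc2 E'].
    assert (c1 = c2) by exact (linear_space_line_unique hlin Hqp Hqc1 Hpc1 Hqc2 Hpc2). subst c2.
    assert (k1 = k2) by (apply (act_inj (phi p c1)); congruence). subst k2.
    split; reflexivity.
Qed.

Lemma M_unique_projection_y_on b lam p mu : I p b -> mu <> act (phi p b) lam ->
  unique_projection M (inr (b, lam)) (p, mu).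
Proof.
  intros Hpb Hmu.
  assert (Hcan : forall m y, M (inr (b, lam)) m -> M y m -> M y (p, mu) ->
            m = (p, act (phi p b) lam) /\ y = inl p).
  { intros [q nu] y [Hqb Enu] Hym Hyz. cbn in Enu. subst nu.
    destruct y as [r|[c k]]; cbn in Hym, Hyz; [now subst|exfalso].
    destruct Hym as [Hqc Ek], Hyz as [Hpc Emu].
    destruct (classic (q = p)) as [->|Hqp]; [congruence|].
    assert (b = c) by exact (linear_space_line_unique hlin Hqp Hqb Hpb Hqc Hpc). subst c.
    apply act_inj in Ek. congruence. }
  split.
  - exists (p, act (phi p b) lam), (inl p). cbn. auto.
  - intros m y m' y' H1 H2 H3 H1' H2' H3'.
    destruct (Hcan m y H1 H2 H3) as [-> ->], (Hcan m' y' H1' H2' H3') as [-> ->]. auto.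
Qed.

Lemma M_projection_axiom : rho_bijective I mul inv act phi -> projection_axiom M.
Proof.
  intros Hb [q|[b lam]] [p mu] Hn; cbn in Hn.
  - apply M_unique_projection_x. congruence.
  - destruct (classic (I p b)) as [Hpb|Hpb].
    + apply M_unique_projection_y_on; [exact Hpb|]. intros ->. tauto.
    + exact (proj1 (rho_lam_bij_iff lam Hpb) (Hb p b Hpb lam) mu).
Qed.

Lemma M_no_isolated : no_isolated_elements M.
Proof.
  destruct hL as [lam0]. split.
  - intros [p|[b lam]].
    + exists (p, lam0). reflexivity.
    + destruct (proj1 (proj2 hlin) b) as [q [_ [_ [Hqb _]]]].
      exists (q, act (phi q b) lam). cbn. auto.
  - intros [p mu]. exists (inl p). reflexivity.
Qed.

Lemma M_partial_linear : partial_linear M.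
Proof.
  intros [p|[b lam]] [q|[c kap]] [r nu] [r' nu'] Hxy H1 H2 H3 H4; cbn in *.
  - congruence.
  - destruct H2, H4. congruence.
  - destruct H1, H3. congruence.
  - destruct H1 as [Hrb E1], H2 as [Hrc E2], H3 as [Hr'b E3], H4 as [Hr'c E4].
    destruct (classic (r = r')) as [<-|Hr]; [congruence|].
    assert (b = c) by exact (linear_space_line_unique hlin Hr Hrb Hr'b Hrc Hr'c). subst c.
    exfalso. apply Hxy. f_equal. f_equal. apply (act_inj (phi r b)). congruence.
Qed.

Lemma M_gen_quadrangle_iff : gen_quadrangle M <-> rho_bijective I mul inv act phi.
Proof.
  split.
  - intros Hq p b Hpb lam. apply (rho_lam_bij_iff lam Hpb). intros mu.
    apply (projection_axiom_of_gen_quadrangle M Hq). cbn. tauto.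
  - intros Hb. exact (gen_quadrangle_of_axioms M M_no_isolated M_partial_linear
                        (M_projection_axiom Hb)).
Qed.

Lemma M_ovoid : ovoid M (fun x => exists p, x = inl p).
Proof.
  intros [p mu]. exists (inl p). split; [split; [eauto|reflexivity]|].
  intros x [[p' ->] Hx]. cbn in Hx. now subst.
Qed.

Lemma points_on_equipotent : rho_bijective I mul inv act phi ->
  forall b, equipotent (points_on I b) L.
Proof.
  intros Hb b. destruct (linear_space_exists_not_on hlin b) as [p Hpb]. destruct hL as [lam].
  exists (rho_lam I mul inv act phi b p lam). exact (Hb p b Hpb lam).
Qed.

Lemma M_line_card p mu {r} : has_card (I p) r -> has_card (fun x => M x (p, mu)) (1 + r).
Proof.
  intros Hr.
  apply (has_card_bij (fun o => match o with
                                | None => inl p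
                                | Some b => inr (b, act (inv (phi p b)) mu) end)
           (has_card_option Hr)).
  - intros [b|] [b'|] _ _ E; try discriminate; [|reflexivity]. now injection E as ->.
  - intros [b|] Hb; cbn; [now rewrite act_act_inv|reflexivity].
  - intros [p'|[b lam]] Hx; cbn in Hx.
    + exists None. now subst.
    + destruct Hx as [Hpb ->]. exists (Some b). now rewrite act_inv_act.
Qed.

Lemma M_point_card x {k} : has_card (fun _ : L => True) k ->
  (forall b, has_card (fun q => I q b) k) -> has_card (fun z => M x z) k.
Proof.
  intros HL Hk. destruct x as [p|[b lam]].
  - apply (has_card_bij (fun mu => (p, mu)) HL).
    + intros mu mu' _ _ E. now injection E.
    + reflexivity.
    + intros [p' mu] E. cbn in E. subst. eauto.
  - apply (has_card_bij (fun q => (q, act (phi q b) lam)) (Hk b)).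
    + intros q q' _ _ E. now injection E.
    + intros q Hq. cbn. auto.
    + intros [q nu] [Hqb E]. cbn in *. subst. eauto.
Qed.

Lemma M_finite_parameters : rho_bijective I mul inv act phi -> finite_type P ->
  finite_type L /\
  exists v k s : nat,
    has_card (fun _ : P => True) v /\ 3 <= v /\
    has_card (fun _ : L => True) k /\ 2 <= k /\
    v - 1 = s * (k - 1) /\
    (forall z, has_card (fun x => M x z) (1 + s)) /\
    (forall x, has_card (fun z => M x z) (1 + (k - 1))).
Proof.
  intros Hb [v Hv]. pose proof (points_on_equipotent Hb) as Heq.
  assert (Hline : forall b, exists k,
             has_card (fun q => I q b) k /\ has_card (fun _ : L => True) k).
  { intros b. destruct (has_card_restrict (fun q => I q b) Hv) as [k Hk].
    apply (has_card_ext (A' := fun q => I q b)) in Hk; [|tauto].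
    exists k. split; [exact Hk|exact (has_card_sig Hk (Heq b))]. }
  destruct (proj2 (proj2 hlin)) as [_ [b0 _]].
  destruct (Hline b0) as [k [Hk0 HL]].
  assert (Hk : forall b, has_card (fun q => I q b) k).
  { intros b. destruct (Hline b) as [kb [Hkb HLb]].
    now rewrite (has_card_unique HL HLb). }
  pose proof (linear_space_line_card_ge2 hlin Hk0) as Hk2.
  destruct (linear_space_constant_replication hlin Hv Hk Hk2) as [s [Hvs Hs]].
  split; [exists k; exact HL|]. exists v, k, s.
  repeat split; try assumption.
  - exact (linear_space_card_ge3 hlin Hv).
  - intros [p mu]. exact (M_line_card p mu (Hs p)).
  - intros x. replace (1 + (k - 1)) with k by lia. exact (M_point_card x HL Hk).
Qed.

End Construction.

Theorem theorem5
  (P B : Type) (I : P -> B -> Prop)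
  (G : Type) (mul : G -> G -> G) (inv : G -> G) (one : G)
  (L : Type) (act : G -> L -> L)
  (phi : P -> B -> G)
  (hlin : linear_space I)
  (hG : is_group mul inv one)
  (hact : is_left_action mul one act)
  (hL : inhabited L) :
  (gen_quadrangle (M_inc I act phi) <->
     (forall (p : P) (b : B), ~ I p b ->
        forall lam : L, bij (rho_lam I mul inv act phi b p lam)))
  /\
  (gen_quadrangle (M_inc I act phi) ->
     (* (1) X = {x_p} is an ovoid *)
     ovoid (M_inc I act phi) (fun x => exists p : P, x = inl p)
     (* (2) |P_b| = |Lambda| for all b; hence a Steiner system *)
     /\ (forall b : B, equipotent (points_on I b) L)
     /\ steiner_system I
     (* (3) finite case *)
     /\ (finite_type P ->
           finite_type L /\
           exists v k s : nat,
             has_card (fun _ : P => True) v /\ 3 <= v /\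
             has_card (fun _ : L => True) k /\ 2 <= k /\
             v - 1 = s * (k - 1) /\
             (forall z : P * L,
                has_card (fun x => M_inc I act phi x z) (1 + s)) /\
             (forall x : P + (B * L),
                has_card (fun z => M_inc I act phi x z) (1 + (k - 1))))).
Proof.
  pose proof (M_gen_quadrangle_iff phi hlin hG hact hL) as Hiff.
  split; [exact Hiff|]. intros Hq.
  pose proof (proj1 Hiff Hq) as Hrho.
  pose proof (points_on_equipotent phi hlin hL Hrho) as Heq.
  split; [exact (M_ovoid phi)|]. split; [exact Heq|]. split.
  - exact (steiner_system_of_equipotent hlin Heq).
  - exact (M_finite_parameters phi hlin hG hact hL Hrho).
Qed.
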